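(* Let $\kappa$ be of class $\mathcal{G}_2(2,0)$, $f\in C^2[0,1]$, and let $\varphi$ be the unique solution of $x-\mathcal{K}(x)=f$. If $v\in C^1[0,1]$, then $$\|(I-Q_n)\mathcal{K}_m'(\varphi)(I-Q_n)v\|_\infty=O(h^3)\quad\text{and}\quad\|\mathcal{K}_m'(\varphi)(I-Q_n)\mathcal{K}_m'(\varphi)(I-Q_n)v\|_\infty=O(h^4).$$
   Context: Setting. A kernel $\kappa:[0,1]\times[0,1]\times\mathbb{R}\to\mathbb{R}$ is of class $\mathcal{G}_2(2,0)$ if: (1) $\ell=\partial\kappa/\partial u$ is continuous on $\Psi=[0,1]^2\times\mathbb{R}$; (2) with $\Psi_1=\{0\le t\le s\le1,u\in\mathbb{R}\}$, $\Psi_2=\{0\le s\le t\le1,u\in\mathbb{R}\}$, there are $\ell_i\in C^{2}(\Psi_i)$ with $\ell=\ell_i$ on $\Psi_i$; (3) there are $\kappa_i\in C^{2}(\Psi_i)$ with $\kappa=\kappa_i$ on $\Psi_i$; (4) $\partial^2\kappa/\partial u^2$ is continuous on $\Psi$. $\mathcal{K}(x)(s)=\int_0^1\kappa(s,t,x(t))dt$ on $L^\infty[0,1]$; the solution $\varphi$ lies in $C^2[0,1]$. Quadrature: Gauss two-point rule with $w_1=w_2=1/2$, $\mu_{1,2}=\tfrac12\mp\tfrac1{2\sqrt3}$. For $n,p\in\mathbb{N}$, $m=np$, $h=1/n$, $\tilde h=1/m$, $s_i=i/m$, $\zeta_q^i=s_{i-1}+\mu_q\tilde h$. $\mathcal{K}_m'(\varphi)v(s)=\tilde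 h\sum_{i=1}^m\sum_{q=1}^2w_q\,\ell(s,\zeta_q^i,\varphi(\zeta_q^i))\,v(\zeta_q^i)$. Projection: $t_j=j/n$. For $v\in C[0,1]$, $(Q_nv)(t)=\frac1p\sum_{\nu=1}^p\sum_{q=1}^2w_qv(\zeta_q^{(j-1)p+\nu})$ for $t\in(t_{j-1},t_j]$, $j=1,\dots,n$, and $(Q_nv)(0)=(Q_nv)(t_1)$ (discrete orthogonal projection onto piecewise constants). Notation: $A=O(B)$ means $|A|\le CB$ with $C$ independent of $n,p$, for all sufficiently large $n$. *)

From Stdlib Require Import Reals Lra List.
From Coquelicot Require Import Coquelicot.
Open Scope R_scope.

Definition sumR (lo k : nat) (f : nat -> R) : R :=
  fold_right (fun i acc => f i + acc) 0 (seq lo k).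

Definition in01 (x : R) : Prop := 0 <= x <= 1.

Definition Psi (s t u : R) : Prop := in01 s /\ in01 t.
Definition Psi1 (s t u : R) : Prop := 0 <= t /\ t <= s /\ s <= 1.
Definition Psi2 (s t u : R) : Prop := 0 <= s /\ s <= t /\ t <= 1.

Definition cont3_on (S : R -> R -> R -> Prop) (g : R -> R -> R -> R) : Prop :=
  forall s t u, S s t u -> forall eps, 0 < eps -> exists delta, 0 < delta /\
    forall s' t' u', S s' t' u' ->
      Rabs (s' - s) < delta -> Rabs (t' - t) < delta -> Rabs (u' - u) < delta ->
      Rabs (g s' t' u' - g s t u) < eps.

Definition allR3 (s t u : R) : Prop := True.

Definition pd1 (g : R -> R -> R -> R) : R -> R -> R -> R :=
  fun s t u => Derive (fun x => g x t u) s.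
Definition pd2 (g : R -> R -> R -> R) : R -> R -> R -> R :=
  fun s t u => Derive (fun x => g s x u) t.
Definition pd3 (g : R -> R -> R -> R) : R -> R -> R -> R :=
  fun s t u => Derive (fun x => g s t x) u.

Definition C1_R3 (g : R -> R -> R -> R) : Prop :=
  cont3_on allR3 g /\
  (forall s t u, ex_derive (fun x => g x t u) s /\ ex_derive (fun x => g s x u) t
                 /\ ex_derive (fun x => g s t x) u) /\
  cont3_on allR3 (pd1 g) /\ cont3_on allR3 (pd2 g) /\ cont3_on allR3 (pd3 g).

Definition C2_R3 (g : R -> R -> R -> R) : Prop :=
  C1_R3 g /\ C1_R3 (pd1 g) /\ C1_R3 (pd2 g) /\ C1_R3 (pd3 g).

(* C^2 on a closed region S: restriction of a C^2 function on R^3 *)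
Definition C2_on (S : R -> R -> R -> Prop) (g : R -> R -> R -> R) : Prop :=
  exists G, C2_R3 G /\ forall s t u, S s t u -> G s t u = g s t u.

Definition ell (kappa : R -> R -> R -> R) : R -> R -> R -> R := pd3 kappa.

Definition class_G2_2_0 (kappa : R -> R -> R -> R) : Prop :=
  (forall s t u, Psi s t u -> ex_derive (fun x => kappa s t x) u) /\
  cont3_on Psi (ell kappa) /\
  (exists l1 l2, C2_on Psi1 l1 /\ C2_on Psi2 l2 /\
     (forall s t u, Psi1 s t u -> ell kappa s t u = l1 s t u) /\
     (forall s t u, Psi2 s t u -> ell kappa s t u = l2 s t u)) /\
  (exists k1 k2, C2_on Psi1 k1 /\ C2_on Psi2 k2 /\
     (forall s t u, Psi1 s t u -> kappa s t u = k1 s t u) /\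
     (forall s t u, Psi2 s t u -> kappa s t u = k2 s t u)) /\
  (forall s t u, Psi s t u -> ex_derive (fun x => ell kappa s t x) u) /\
  cont3_on Psi (pd3 (ell kappa)).

Definition C1_R (g : R -> R) : Prop :=
  (forall x, continuous g x) /\ (forall x, ex_derive g x) /\
  (forall x, continuous (Derive g) x).
Definition C2_R (g : R -> R) : Prop :=
  C1_R g /\ C1_R (Derive g).
(* C^k[0,1]: restriction to [0,1] of a C^k function on R *)
Definition C1_01 (g : R -> R) : Prop :=
  exists G, C1_R G /\ forall x, in01 x -> G x = g x.
Definition C2_01 (g : R -> R) : Prop :=
  exists G, C2_R G /\ forall x, in01 x -> G x = g x.
Definition C0_01 (g : R -> R) : Prop :=
  forall s, in01 s -> forall eps, 0 < eps -> exists delta, 0 < delta /\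
    forall t, in01 t -> Rabs (t - s) < delta -> Rabs (g t - g s) < eps.

Definition Kop (kappa : R -> R -> R -> R) (x : R -> R) (s : R) : R :=
  RInt (fun t => kappa s t (x t)) 0 1.
Definition solves (kappa : R -> R -> R -> R) (f x : R -> R) : Prop :=
  forall s, in01 s -> x s - Kop kappa x s = f s.

(* ---------- Gauss two-point rule ---------- *)
Definition w_gauss : R := / 2.
Definition mu1 : R := / 2 - / (2 * sqrt 3).
Definition mu2 : R := / 2 + / (2 * sqrt 3).
Definition mu (q : nat) : R := if Nat.eqb q 1 then mu1 else mu2.
(* zeta_q^i = s_{i-1} + mu_q / m, i = 1..m, q = 1,2 *)
Definition zeta (m i q : nat) : R := INR (i - 1) / INR m + mu q / INR m.

Definition Kmp (kappa : R -> R -> R -> R) (phi : R -> R) (m : nat)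
    (v : R -> R) (s : R) : R :=
  / INR m * sumR 1 m (fun i => sumR 1 2 (fun q =>
     w_gauss * ell kappa s (zeta m i q) (phi (zeta m i q)) * v (zeta m i q))).

(* ---------- discrete orthogonal projection Q_n onto piecewise constants ---- *)
Definition cell_avg (n p : nat) (v : R -> R) (j : nat) : R :=
  / INR p * sumR 1 p (fun nu => sumR 1 2 (fun q =>
     w_gauss * v (zeta (n * p) ((j - 1) * p + nu) q))).

Definition indic {P : Prop} (d : {P} + {~ P}) : R := if d then 1 else 0.

Definition in_cell (n j : nat) (t : R) : Prop :=
  INR (j - 1) / INR n < t /\ t <= INR j / INR n.

Definition in_cell_dec (n j : nat) (t : R) : {in_cell n j t} + {~ in_cell n j t}.
Proof.
  unfold in_cell.
  destruct (Rlt_dec (INR (j - 1) / INR n) t) as [H1|H1];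
  destruct (Rle_dec t (INR j / INR n)) as [H2|H2]; tauto.
Defined.

(* (Q_n v)(t) = cell_avg j on (t_{j-1}, t_j], j = 1..n; (Q_n v)(0) = (Q_n v)(t_1) *)
Definition Qn (n p : nat) (v : R -> R) (t : R) : R :=
  sumR 1 n (fun j => indic (in_cell_dec n j t) * cell_avg n p v j)
  + indic (Req_dec_T t 0) * cell_avg n p v 1.

Definition IQn (n p : nat) (v : R -> R) : R -> R := fun t => v t - Qn n p v t.

From Stdlib Require Import Reals Lra Lia List Classical ClassicalEpsilon.
From Coquelicot Require Import Coquelicot.
Open Scope R_scope.

(* The error e = (I - Q_n) v has zero discrete mean on every coarse cell and is O(h) at
   the Gauss nodes.  In the quadrature sum for K_m'(phi) e (s), each cell's contribution is
   therefore unchanged when the kernel t |-> l(s, t, phi t) is replaced by its deviation from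
   its value at the left end of the cell.  Off the cell containing s the kernel is smooth in t
   (l is smooth on either side of the diagonal), so this deviation is O(h); the cell
   containing s is a single cell of weight h.  Applied to the difference of the kernels at two
   points s, s' of one cell, whose size is O(h) and whose t-increments are O(h^2) off that
   cell, this shows that K_m'(phi) e oscillates by O(h^3) on every cell, which bounds
   (I - Q_n) K_m'(phi) e by O(h^3).  The same cancellation applied to this O(h^3) function
   with zero cell means gives the O(h^4) bound. *)

Lemma sumR_S lo k f : sumR lo (S k) f = f lo + sumR (S lo) k f.
Proof. reflexivity. Qed.

Lemma sumR_ext lo k f g : (forall i, (lo <= i < lo + k)%nat -> f i = g i) ->
  sumR lo k f = sumR lo k g.
Proof.
  revert lo; induction k as [|k IH]; intros lo H; [reflexivity|].
  rewrite !sumR_S, H by lia. f_equal. apply IH. intros; apply H; lia.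
Qed.

Lemma sumR_app lo a b f : sumR lo (a + b) f = sumR lo a f + sumR (lo + a) b f.
Proof.
  revert lo; induction a as [|a IH]; intros lo; simpl.
  - rewrite Nat.add_0_r. unfold sumR at 2. simpl. ring.
  - change (sumR lo (S (a + b)) f) with (f lo + sumR (S lo) (a + b) f).
    rewrite sumR_S, IH. replace (S lo + a)%nat with (lo + S a)%nat by lia. ring.
Qed.

Lemma sumR_shift lo a k f : sumR (lo + a) k f = sumR lo k (fun i => f (i + a)%nat).
Proof.
  revert lo; induction k as [|k IH]; intros lo; [reflexivity|].
  rewrite !sumR_S. replace (S (lo + a)) with (S lo + a)%nat by lia. rewrite IH.
  reflexivity.
Qed.

Lemma sumR_plus lo k f g : sumR lo k (fun i => f i + g i) = sumR lo k f + sumR lo k g.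
Proof.
  revert lo; induction k as [|k IH]; intros lo; [unfold sumR; simpl; ring|].
  rewrite !sumR_S, IH. ring.
Qed.

Lemma sumR_scal lo k c f : sumR lo k (fun i => c * f i) = c * sumR lo k f.
Proof.
  revert lo; induction k as [|k IH]; intros lo; [unfold sumR; simpl; ring|].
  rewrite !sumR_S, IH. ring.
Qed.

Lemma sumR_minus lo k f g : sumR lo k (fun i => f i - g i) = sumR lo k f - sumR lo k g.
Proof.
  rewrite (sumR_ext _ _ _ (fun i => f i + -1 * g i)) by (intros; ring).
  rewrite sumR_plus, sumR_scal. ring.
Qed.

Lemma sumR_const lo k c : sumR lo k (fun _ => c) = INR k * c.
Proof.
  revert lo; induction k as [|k IH]; intros lo; [unfold sumR; simpl; ring|].
  rewrite sumR_S, IH, S_INR. ring.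
Qed.

Lemma sumR_zero lo k f : (forall i, (lo <= i < lo + k)%nat -> f i = 0) -> sumR lo k f = 0.
Proof. intros H. rewrite (sumR_ext _ _ _ (fun _ => 0)), sumR_const by auto. ring. Qed.

Lemma sumR_single lo k f i0 : (lo <= i0 < lo + k)%nat ->
  (forall i, (lo <= i < lo + k)%nat -> i <> i0 -> f i = 0) -> sumR lo k f = f i0.
Proof.
  revert lo; induction k as [|k IH]; intros lo Hi H; [lia|].
  rewrite sumR_S. destruct (Nat.eq_dec lo i0) as [->|Hne].
  - rewrite sumR_zero by (intros; apply H; lia). ring.
  - rewrite H, IH by (lia || (intros; apply H; lia)). ring.
Qed.

Lemma sumR_blocks n p F :
  sumR 1 (n * p) F = sumR 1 n (fun j => sumR 1 p (fun nu => F ((j - 1) * p + nu)%nat)).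
Proof.
  induction n as [|n IH]; [reflexivity|].
  replace (S n * p)%nat with (n * p + p)%nat by lia.
  replace (S n) with (n + 1)%nat by lia.
  rewrite sumR_app, IH, sumR_app. f_equal.
  rewrite sumR_shift. unfold sumR at 2. simpl.
  rewrite Rplus_0_r. apply sumR_ext. intros. f_equal. lia.
Qed.

Lemma sumR_abs_le lo k f M : (forall i, (lo <= i < lo + k)%nat -> Rabs (f i) <= M) ->
  Rabs (sumR lo k f) <= INR k * M.
Proof.
  revert lo; induction k as [|k IH]; intros lo H.
  - unfold sumR; simpl. rewrite Rabs_R0. lra.
  - rewrite sumR_S, S_INR. eapply Rle_trans; [apply Rabs_triang|].
    pose proof (H lo ltac:(lia)). pose proof (IH (S lo) ltac:(intros; apply H; lia)). lra.
Qed.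

Lemma sumR_abs_le_except lo k f i0 M M' :
  (forall i, (lo <= i < lo + k)%nat -> i <> i0 -> Rabs (f i) <= M) ->
  Rabs (f i0) <= M' -> 0 <= M -> 0 <= M' ->
  Rabs (sumR lo k f) <= INR k * M + M'.
Proof.
  revert lo; induction k as [|k IH]; intros lo H H0 HM HM'.
  - unfold sumR; simpl. rewrite Rabs_R0. lra.
  - rewrite sumR_S, S_INR. eapply Rle_trans; [apply Rabs_triang|].
    destruct (Nat.eq_dec lo i0) as [->|Hne].
    + pose proof (sumR_abs_le (S i0) k f M ltac:(intros; apply H; lia)). lra.
    + pose proof (H lo ltac:(lia) Hne).
      pose proof (IH (S lo) ltac:(intros; apply H; lia) H0 HM HM'). lra.
Qed.

Definition lipschitz01 (L : R) (g : R -> R) : Prop :=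
  forall x y, in01 x -> in01 y -> Rabs (g x - g y) <= L * Rabs (x - y).

Lemma in01_between a b x : in01 a -> in01 b -> Rmin a b <= x <= Rmax a b -> in01 x.
Proof. unfold in01, Rmin, Rmax. destruct (Rle_dec a b); lra. Qed.

Lemma Rabs_le_between_bounds a b x B : Rabs a <= B -> Rabs b <= B ->
  Rmin a b <= x <= Rmax a b -> Rabs x <= B.
Proof.
  rewrite !Rabs_le_between. unfold Rmin, Rmax. destruct (Rle_dec a b); lra.
Qed.

Lemma MVT_abs_le (f : R -> R) (M a b : R) :
  (forall x, ex_derive f x) ->
  (forall x, Rmin a b <= x <= Rmax a b -> Rabs (Derive f x) <= M) ->
  Rabs (f b - f a) <= M * Rabs (b - a).
Proof.
  intros Hd HM.
  destruct (MVT_gen f a b (Derive f)) as [c [Hc ->]].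
  - intros x _. apply Derive_correct, Hd.
  - intros x _. apply continuity_pt_filterlim.
    apply (ex_derive_continuous (K := R_AbsRing) (V := R_NormedModule)), Hd.
  - rewrite Rabs_mult. apply Rmult_le_compat_r; [apply Rabs_pos|]. apply HM, Hc.
Qed.

Lemma continuous_bounded01 (g : R -> R) : (forall x, continuous g x) ->
  exists M, forall x, in01 x -> Rabs (g x) <= M.
Proof.
  intros Hg.
  destruct (bounded_continuity (V := R_NormedModule) g 0 1 (fun x _ => Hg x)) as [M HM].
  exists M. intros x Hx. left. exact (HM x Hx).
Qed.

Lemma C1_R_lipschitz01 (g : R -> R) : C1_R g -> exists L, 0 <= L /\ lipschitz01 L g.
Proof.
  intros [_ [Hd Hdc]].
  destruct (continuous_bounded01 (Derive g) Hdc) as [M HM].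
  exists (Rabs M). split; [apply Rabs_pos|]. intros x y Hx Hy.
  apply MVT_abs_le; [exact Hd|]. intros z Hz.
  eapply Rle_trans; [apply HM, (in01_between y x z Hy Hx Hz)|apply Rle_abs].
Qed.

Lemma C2_01_C1_01 (g : R -> R) : C2_01 g -> C1_01 g.
Proof. intros [G [[HG _] E]]. exists G. auto. Qed.

Lemma C1_01_lipschitz01 (g : R -> R) : C1_01 g -> exists L, 0 <= L /\ lipschitz01 L g.
Proof.
  intros [G [HG E]]. destruct (C1_R_lipschitz01 G HG) as [L [HL HGL]].
  exists L. split; [exact HL|]. intros x y Hx Hy. rewrite <- (E x Hx), <- (E y Hy). auto.
Qed.

Lemma C1_01_bounded (g : R -> R) : C1_01 g -> exists B, forall t, in01 t -> Rabs (g t) <= B.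
Proof.
  intros [G [[HG _] E]]. destruct (continuous_bounded01 G HG) as [B HB].
  exists B. intros t Ht. rewrite <- (E t Ht). auto.
Qed.

Lemma lipschitz01_glue (f : R -> R) (L m : R) : in01 m ->
  (forall x y, in01 x -> in01 y -> x <= m -> y <= m -> Rabs (f x - f y) <= L * Rabs (x - y)) ->
  (forall x y, in01 x -> in01 y -> m <= x -> m <= y -> Rabs (f x - f y) <= L * Rabs (x - y)) ->
  lipschitz01 L f.
Proof.
  intros Hm Hlo Hhi.
  assert (Hcross : forall x y, in01 x -> in01 y -> x <= m -> m <= y ->
            Rabs (f x - f y) <= L * Rabs (x - y)).
  { intros x y Hx Hy Hxm Hmy.
    pose proof (Hlo x m Hx Hm Hxm (Rle_refl m)).
    pose proof (Hhi m y Hm Hy (Rle_refl m) Hmy).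
    pose proof (Rabs_triang (f x - f m) (f m - f y)).
    replace (f x - f m + (f m - f y)) with (f x - f y) in * by ring.
    rewrite (Rabs_left1 (x - m)), (Rabs_left1 (m - y)), (Rabs_left1 (x - y)) in * by lra.
    lra. }
  intros x y Hx Hy.
  destruct (Rle_dec x m), (Rle_dec y m).
  - auto.
  - apply Hcross; auto; lra.
  - rewrite Rabs_minus_sym, (Rabs_minus_sym x). apply Hcross; auto; lra.
  - apply Hhi; auto; lra.
Qed.

Lemma fold_right_Rmax_ge {A : Type} (F : A -> R) (l : list A) x :
  In x l -> F x <= fold_right (fun y acc => Rmax (F y) acc) 0 l.
Proof.
  induction l as [|a l IH]; simpl; [tauto|].
  intros [->|H]; [apply Rmax_l|]. eapply Rle_trans; [apply IH, H|apply Rmax_r].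
Qed.

Lemma cont3_box_bound (g : R -> R -> R -> R) (B : R) : cont3_on allR3 g ->
  exists M, 0 <= M /\ forall s t u, in01 s -> in01 t -> Rabs u <= B -> Rabs (g s t u) <= M.
Proof.
  intros Hg.
  assert (Hdelta : forall x : Compactness.Tn 3 R, {d : posreal | forall s t u,
     let '(a, (b, (c, _))) := x in
     Rabs (s - a) < d -> Rabs (t - b) < d -> Rabs (u - c) < d ->
     Rabs (g s t u - g a b c) < 1}).
  { intros [a [b [c []]]]. apply constructive_indefinite_description.
    destruct (Hg a b c I 1 Rlt_0_1) as [d [Hd Hd']].
    exists (mkposreal d Hd). intros s t u. apply Hd'. exact I. }
  set (val := fun x : Compactness.Tn 3 R => let '(a, (b, (c, _))) := x in Rabs (g a b c) + 1).
  apply NNPP; intro Hnot.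
  apply (Compactness.compactness_list 3 (0, (0, (-B, tt))) (1, (1, (B, tt)))
           (fun x => proj1_sig (Hdelta x))).
  intros [l Hl]; apply Hnot.
  exists (Rabs (fold_right (fun y acc => Rmax (val y) acc) 0 l)).
  split; [apply Rabs_pos|]. intros s t u Hs Ht Hu.
  apply Rabs_le_between in Hu.
  destruct (Hl (s, (t, (u, tt)))) as [x [Hin [_ Hclose]]]; [simpl; unfold in01 in *; tauto|].
  eapply Rle_trans; [|apply Rle_abs].
  eapply Rle_trans; [|apply (fold_right_Rmax_ge val l x Hin)].
  destruct x as [a [b [c []]]]. simpl in Hclose |- *.
  destruct (Hdelta (a, (b, (c, tt)))) as [d Hd]. simpl in Hclose.
  destruct Hclose as [H1 [H2 [H3 _]]].
  pose proof (Hd s t u H1 H2 H3).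
  pose proof (Rabs_triang_inv (g s t u) (g a b c)). lra.
Qed.

(** * Regularity of the kernel *)

Lemma C2_R3_box_bounds (G : R -> R -> R -> R) (B : R) : C2_R3 G ->
  exists M, 0 <= M /\ forall s t u, in01 s -> in01 t -> Rabs u <= B ->
    Rabs (G s t u) <= M /\ Rabs (pd1 G s t u) <= M /\ Rabs (pd2 G s t u) <= M /\
    Rabs (pd3 G s t u) <= M /\ Rabs (pd2 (pd1 G) s t u) <= M /\
    Rabs (pd3 (pd1 G) s t u) <= M.
Proof.
  intros [[c0 [_ [c1 [c2 c3]]]] [[_ [_ [_ [c12 c13]]]] _]].
  destruct (cont3_box_bound _ B c0) as [M0 [P0 B0]].
  destruct (cont3_box_bound _ B c1) as [M1 [P1 B1]].
  destruct (cont3_box_bound _ B c2) as [M2 [P2 B2]].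
  destruct (cont3_box_bound _ B c3) as [M3 [P3 B3]].
  destruct (cont3_box_bound _ B c12) as [M4 [P4 B4]].
  destruct (cont3_box_bound _ B c13) as [M5 [P5 B5]].
  exists (M0 + M1 + M2 + M3 + M4 + M5). split; [lra|]. intros s t u Hs Ht Hu.
  specialize (B0 s t u Hs Ht Hu). specialize (B1 s t u Hs Ht Hu).
  specialize (B2 s t u Hs Ht Hu). specialize (B3 s t u Hs Ht Hu).
  specialize (B4 s t u Hs Ht Hu). specialize (B5 s t u Hs Ht Hu).
  repeat split; lra.
Qed.

Lemma graph_lipschitz (H : R -> R -> R -> R) (phi : R -> R) (B Lp M : R) :
  (forall s t u, ex_derive (fun x => H s x u) t /\ ex_derive (fun x => H s t x) u) ->
  (forall s t u, in01 s -> in01 t -> Rabs u <= B ->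
     Rabs (pd2 H s t u) <= M /\ Rabs (pd3 H s t u) <= M) ->
  0 <= M -> (forall t, in01 t -> Rabs (phi t) <= B) -> lipschitz01 Lp phi ->
  forall s t c, in01 s -> in01 t -> in01 c ->
  Rabs (H s t (phi t) - H s c (phi c)) <= M * (1 + Lp) * Rabs (t - c).
Proof.
  intros Hd HM HM0 HB Hphi s t c Hs Ht Hc.
  assert (Et : Rabs (H s t (phi t) - H s c (phi t)) <= M * Rabs (t - c)).
  { apply (MVT_abs_le (fun x => H s x (phi t))).
    - intros x. exact (proj1 (Hd s x (phi t))).
    - intros x Hx. exact (proj1 (HM s x (phi t) Hs (in01_between c t x Hc Ht Hx) (HB t Ht))). }
  assert (Eu : Rabs (H s c (phi t) - H s c (phi c)) <= M * Rabs (phi t - phi c)).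
  { apply (MVT_abs_le (fun x => H s c x)).
    - intros x. exact (proj2 (Hd s c x)).
    - intros x Hx.
      exact (proj2 (HM s c x Hs Hc (Rabs_le_between_bounds _ _ x B (HB c Hc) (HB t Ht) Hx))). }
  assert (M * Rabs (phi t - phi c) <= M * (Lp * Rabs (t - c)))
    by (apply Rmult_le_compat_l; auto).
  pose proof (Rabs_triang (H s t (phi t) - H s c (phi t)) (H s c (phi t) - H s c (phi c))).
  replace (H s t (phi t) - H s c (phi t) + (H s c (phi t) - H s c (phi c)))
    with (H s t (phi t) - H s c (phi c)) in * by ring.
  lra.
Qed.

Definition sides_apart (s s' t c : R) : Prop :=
  (t <= s /\ c <= s /\ t <= s' /\ c <= s') \/ (s <= t /\ s <= c /\ s' <= t /\ s' <= c).

(* Modelled on [lam s t = ell kappa s t (phi t)], whose kink at [t = s] is why the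
   estimates in [t] require [sides_apart]. *)
Record kernel_estimates (K : R) (lam : R -> R -> R) : Prop := {
  ke_bound : forall s t, in01 s -> in01 t -> Rabs (lam s t) <= K;
  ke_lip_t : forall s t c, in01 s -> in01 t -> in01 c -> sides_apart s s t c ->
    Rabs (lam s t - lam s c) <= K * Rabs (t - c);
  ke_lip_s : forall s s' t, in01 s -> in01 s' -> in01 t ->
    Rabs (lam s t - lam s' t) <= K * Rabs (s - s');
  ke_mixed : forall s s' t c, in01 s -> in01 s' -> in01 t -> in01 c -> sides_apart s s' t c ->
    Rabs (lam s t - lam s' t - (lam s c - lam s' c)) <= K * Rabs (s - s') * Rabs (t - c)
}.

Lemma kernel_estimates_nonneg K lam : kernel_estimates K lam -> 0 <= K.
Proof.
  intros HK. assert (H0 : in01 0) by (unfold in01; lra).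
  eapply Rle_trans; [apply Rabs_pos|apply (ke_bound K lam HK 0 0 H0 H0)].
Qed.

Lemma kernel_estimates_le K K' lam : K <= K' -> kernel_estimates K lam -> kernel_estimates K' lam.
Proof.
  intros HKK' [Hb Ht Hs Hm].
  constructor; intros.
  - eapply Rle_trans; [apply Hb; assumption|lra].
  - eapply Rle_trans; [apply Ht; assumption|].
    apply Rmult_le_compat_r; [apply Rabs_pos|lra].
  - eapply Rle_trans; [apply Hs; assumption|].
    apply Rmult_le_compat_r; [apply Rabs_pos|lra].
  - eapply Rle_trans; [apply Hm; assumption|].
    apply Rmult_le_compat_r; [apply Rabs_pos|].
    apply Rmult_le_compat_r; [apply Rabs_pos|lra].
Qed.

Lemma C2_R3_kernel_estimates (G : R -> R -> R -> R) (phi : R -> R) (B Lp : R) :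
  C2_R3 G -> 0 <= Lp -> (forall t, in01 t -> Rabs (phi t) <= B) -> lipschitz01 Lp phi ->
  exists K, kernel_estimates K (fun s t => G s t (phi t)).
Proof.
  intros HG HLp HB Hphi.
  destruct (C2_R3_box_bounds G B HG) as [M [HM HGb]].
  destruct HG as [[_ [Hd _]] [[_ [Hd1 _]] _]].
  exists (M * (1 + Lp)).
  assert (HMK : M <= M * (1 + Lp)) by nra.
  constructor.
  - intros s t Hs Ht. pose proof (proj1 (HGb s t (phi t) Hs Ht (HB t Ht))). lra.
  - intros s t c Hs Ht Hc _. apply (graph_lipschitz G phi B Lp M); auto.
    + intros a b u. exact (proj2 (Hd a b u)).
    + intros a b u Ha Hb Hu. destruct (HGb a b u Ha Hb Hu) as (_ & _ & H2 & H3 & _). auto.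
  - intros s s' t Hs Hs' Ht.
    eapply Rle_trans; [apply (MVT_abs_le (fun x => G x t (phi t)) M s' s)|].
    + intros x. exact (proj1 (Hd x t (phi t))).
    + intros x Hx.
      exact (proj1 (proj2 (HGb x t (phi t) (in01_between s' s x Hs' Hs Hx) Ht (HB t Ht)))).
    + apply Rmult_le_compat_r; [apply Rabs_pos|lra].
  - intros s s' t c Hs Hs' Ht Hc _.
    set (g := fun x => G x t (phi t) - G x c (phi c)).
    replace (G s t (phi t) - G s' t (phi t) - (G s c (phi c) - G s' c (phi c)))
      with (g s - g s') by (unfold g; ring).
    replace (M * (1 + Lp) * Rabs (s - s') * Rabs (t - c))
      with (M * (1 + Lp) * Rabs (t - c) * Rabs (s - s')) by ring.
    apply MVT_abs_le.
    + intros x. apply (ex_derive_minus (K := R_AbsRing) (V := R_NormedModule)).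
      * exact (proj1 (Hd x t (phi t))).
      * exact (proj1 (Hd x c (phi c))).
    + intros x Hx. unfold g.
      rewrite Derive_minus; [|exact (proj1 (Hd x t (phi t)))|exact (proj1 (Hd x c (phi c)))].
      apply (graph_lipschitz (pd1 G) phi B Lp M); auto.
      * intros a b u. exact (proj2 (Hd1 a b u)).
      * intros a b u Ha Hb Hu.
        destruct (HGb a b u Ha Hb Hu) as (_ & _ & _ & _ & H12 & H13). auto.
      * exact (in01_between s' s x Hs' Hs Hx).
Qed.

Lemma kernel_estimates_glue K (lam1 lam2 lam : R -> R -> R) :
  kernel_estimates K lam1 -> kernel_estimates K lam2 ->
  (forall s t, in01 s -> in01 t -> t <= s -> lam s t = lam1 s t) ->
  (forall s t, in01 s -> in01 t -> s <= t -> lam s t = lam2 s t) ->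
  kernel_estimates K lam.
Proof.
  intros H1 H2 E1 E2. constructor.
  - intros s t Hs Ht. destruct (Rle_dec t s).
    + rewrite E1 by auto. apply H1; auto.
    + rewrite E2 by (auto; lra). apply H2; auto.
  - intros s t c Hs Ht Hc Hap. destruct Hap as [Hb|Ha].
    + rewrite !E1 by (first [assumption | lra]). apply H1; auto. left; exact Hb.
    + rewrite !E2 by (first [assumption | lra]). apply H2; auto. right; exact Ha.
  - intros s s' t Hs Hs' Ht.
    refine (lipschitz01_glue (fun x => lam x t) K t Ht _ _ s s' Hs Hs').
    + intros x y Hx Hy Hxt Hyt. rewrite !E2 by assumption. apply H2; auto.
    + intros x y Hx Hy Hxt Hyt. rewrite !E1 by assumption. apply H1; auto.
  - intros s s' t c Hs Hs' Ht Hc Hap. destruct Hap as [Hb|Ha].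
    + rewrite !E1 by (first [assumption | lra]). apply H1; auto. left; exact Hb.
    + rewrite !E2 by (first [assumption | lra]). apply H2; auto. right; exact Ha.
Qed.

Lemma ell_kernel_estimates kappa (phi : R -> R) (B Lp : R) :
  class_G2_2_0 kappa -> 0 <= Lp ->
  (forall t, in01 t -> Rabs (phi t) <= B) -> lipschitz01 Lp phi ->
  exists K, kernel_estimates K (fun s t => ell kappa s t (phi t)).
Proof.
  intros Hk HLp HB Hphi.
  destruct Hk as [_ [_ [[l1 [l2 [[G1 [HG1 E1]] [[G2 [HG2 E2]] [El1 El2]]]]] _]]].
  destruct (C2_R3_kernel_estimates G1 phi B Lp HG1 HLp HB Hphi) as [K1 HK1].
  destruct (C2_R3_kernel_estimates G2 phi B Lp HG2 HLp HB Hphi) as [K2 HK2].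
  exists (Rmax K1 K2).
  apply (kernel_estimates_glue _ (fun s t => G1 s t (phi t)) (fun s t => G2 s t (phi t))).
  - exact (kernel_estimates_le K1 _ _ (Rmax_l K1 K2) HK1).
  - exact (kernel_estimates_le K2 _ _ (Rmax_r K1 K2) HK2).
  - intros s t Hs Ht Hts. unfold in01 in *.
    rewrite El1, E1 by (unfold Psi1; repeat split; lra). reflexivity.
  - intros s t Hs Ht Hst. unfold in01 in *.
    rewrite El2, E2 by (unfold Psi2; repeat split; lra). reflexivity.
Qed.

Definition cell_node (n p j nu q : nat) : R := zeta (n * p) ((j - 1) * p + nu) q.

Definition closed_cell (n j : nat) (x : R) : Prop := INR (j - 1) / INR n <= x <= INR j / INR n.

Lemma mu_bounds q : 0 < mu q < 1.
Proof.
  assert (H3 : 1 < sqrt 3) by (rewrite <- sqrt_1; apply sqrt_lt_1; lra).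
  assert (H : 0 < / (2 * sqrt 3) < / 2).
  { split; [apply Rinv_0_lt_compat; lra|apply Rinv_lt_contravar; nra]. }
  unfold mu, mu1, mu2. destruct (Nat.eqb q 1); lra.
Qed.

Lemma cell_node_bounds n p j nu q : (1 <= n)%nat -> (1 <= p)%nat -> (1 <= j)%nat ->
  (1 <= nu <= p)%nat ->
  INR (j - 1) / INR n < cell_node n p j nu q < INR j / INR n.
Proof.
  intros Hn Hp Hj Hnu. unfold cell_node, zeta.
  assert (Hn' : 1 <= INR n) by (apply (le_INR 1); lia).
  assert (Hp' : 1 <= INR p) by (apply (le_INR 1); lia).
  assert (Hnu' : 0 <= INR (nu - 1) <= INR p - 1).
  { split; [apply pos_INR|]. rewrite minus_INR by lia.
    pose proof (le_INR nu p ltac:(lia)). simpl; lra. }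
  replace ((j - 1) * p + nu - 1)%nat with ((j - 1) * p + (nu - 1))%nat by nia.
  rewrite plus_INR, !mult_INR.
  replace (INR j) with (INR (j - 1) + 1) by (rewrite minus_INR by lia; simpl; ring).
  pose proof (mu_bounds q).
  assert (0 <= INR (j - 1)) by apply pos_INR.
  set (a := INR (j - 1)) in *. set (N := INR n) in *. set (P := INR p) in *.
  set (m := mu q) in *. set (b := INR (nu - 1)) in *.
  split; apply (Rmult_lt_reg_r (N * P)); try nra; field_simplify; lra.
Qed.

Lemma cell_node_closed n p j nu q : (1 <= n)%nat -> (1 <= p)%nat -> (1 <= j)%nat ->
  (1 <= nu <= p)%nat -> closed_cell n j (cell_node n p j nu q).
Proof.
  intros Hn Hp Hj Hnu. pose proof (cell_node_bounds n p j nu q Hn Hp Hj Hnu).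
  unfold closed_cell. lra.
Qed.

Lemma closed_cell_in01 n j x : (1 <= j <= n)%nat -> closed_cell n j x -> in01 x.
Proof.
  intros Hj [H1 H2].
  assert (HN : 0 < INR n) by (apply lt_0_INR; lia).
  assert (0 <= INR (j - 1) / INR n) by (apply Rdiv_le_0_compat; [apply pos_INR|lra]).
  assert (INR j / INR n <= 1).
  { apply (Rmult_le_reg_r (INR n)); [lra|]. unfold Rdiv.
    rewrite Rmult_assoc, Rinv_l, Rmult_1_r, Rmult_1_l by lra. apply le_INR; lia. }
  unfold in01; lra.
Qed.

Lemma closed_cell_width n j x y : (1 <= j)%nat ->
  closed_cell n j x -> closed_cell n j y -> Rabs (x - y) <= / INR n.
Proof.
  intros Hj [H1 H2] [H3 H4].
  replace (INR j) with (INR (j - 1) + 1) in * by (rewrite minus_INR by lia; simpl; ring).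
  unfold Rdiv in *. rewrite Rmult_plus_distr_r, Rmult_1_l in *.
  apply Rabs_le. lra.
Qed.

Lemma closed_cell_left n j : (1 <= n)%nat -> (1 <= j)%nat ->
  closed_cell n j (INR (j - 1) / INR n).
Proof.
  intros Hn Hj. split; [lra|]. unfold Rdiv. apply Rmult_le_compat_r.
  - left; apply Rinv_0_lt_compat, lt_0_INR; lia.
  - apply le_INR; lia.
Qed.

Lemma closed_cell_ordered n k j x s : (1 <= n)%nat -> (k < j)%nat ->
  closed_cell n k x -> closed_cell n j s -> x <= s.
Proof.
  intros Hn Hkj [_ Hx] [Hs _].
  assert (INR k / INR n <= INR (j - 1) / INR n).
  { unfold Rdiv. apply Rmult_le_compat_r.
    - left; apply Rinv_0_lt_compat, lt_0_INR; lia.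
    - apply le_INR; lia. }
  lra.
Qed.

Lemma closed_cells_apart n j k s s' x y : (1 <= n)%nat -> k <> j ->
  closed_cell n j s -> closed_cell n j s' -> closed_cell n k x -> closed_cell n k y ->
  sides_apart s s' x y.
Proof.
  intros Hn Hkj Hs Hs' Hx Hy.
  destruct (Nat.lt_ge_cases k j) as [Hlt|Hge].
  - left. repeat split; eapply closed_cell_ordered; eauto.
  - assert (Hlt : (j < k)%nat) by lia.
    right. repeat split; eapply closed_cell_ordered; eauto.
Qed.

Lemma in_cell_unique n j j' t : (1 <= n)%nat -> (1 <= j)%nat -> (1 <= j')%nat ->
  in_cell n j t -> in_cell n j' t -> j = j'.
Proof.
  intros Hn Hj Hj' [H1 H2] [H3 H4].
  assert (HN : 0 < / INR n) by (apply Rinv_0_lt_compat, lt_0_INR; lia).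
  assert (E1 : INR (j - 1) < INR j').
  { apply (Rmult_lt_reg_r (/ INR n)); [exact HN|]. unfold Rdiv in *. lra. }
  assert (E2 : INR (j' - 1) < INR j).
  { apply (Rmult_lt_reg_r (/ INR n)); [exact HN|]. unfold Rdiv in *. lra. }
  apply INR_lt in E1. apply INR_lt in E2. lia.
Qed.

Lemma in_cell_exists n s : (1 <= n)%nat -> 0 < s <= 1 ->
  exists j, (1 <= j <= n)%nat /\ in_cell n j s.
Proof.
  intros Hn Hs.
  assert (HN : 0 < INR n) by (apply lt_0_INR; lia).
  assert (Hk : forall k, s <= INR k / INR n -> exists j, (1 <= j <= k)%nat /\ in_cell n j s).
  { induction k as [|k IH]; intros Hsk.
    - simpl in Hsk. unfold Rdiv in Hsk. rewrite Rmult_0_l in Hsk. lra.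
    - destruct (Rle_dec s (INR k / INR n)) as [H|H].
      + destruct (IH H) as [j [Hj Hc]]. exists j. split; [lia|exact Hc].
      + exists (S k). split; [lia|]. split; [|exact Hsk].
        replace (S k - 1)%nat with k by lia. lra. }
  apply Hk. unfold Rdiv. rewrite Rinv_r; lra.
Qed.

(** * Cell averages and the projection Q_n *)

Lemma cell_avg_ext n p j f g :
  (forall nu q, (1 <= nu <= p)%nat -> f (cell_node n p j nu q) = g (cell_node n p j nu q)) ->
  cell_avg n p f j = cell_avg n p g j.
Proof.
  intros H. unfold cell_avg, cell_node in *. f_equal.
  apply sumR_ext. intros nu Hnu. apply sumR_ext. intros q _.
  rewrite H by lia. reflexivity.
Qed.

Lemma cell_avg_add n p j f g :
  cell_avg n p (fun t => f t + g t) j = cell_avg n p f j + cell_avg n p g j.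
Proof.
  unfold cell_avg. rewrite <- Rmult_plus_distr_l, <- sumR_plus. f_equal.
  apply sumR_ext. intros nu _. rewrite <- sumR_plus. apply sumR_ext. intros q _. ring.
Qed.

Lemma cell_avg_scal n p j c f :
  cell_avg n p (fun t => c * f t) j = c * cell_avg n p f j.
Proof.
  unfold cell_avg.
  rewrite (sumR_ext _ _ _ (fun nu => c * sumR 1 2 (fun q =>
             w_gauss * f (zeta (n * p) ((j - 1) * p + nu) q)))).
  - rewrite sumR_scal. ring.
  - intros nu _. rewrite <- sumR_scal. apply sumR_ext. intros q _. ring.
Qed.

Lemma cell_avg_sub n p j f g :
  cell_avg n p (fun t => f t - g t) j = cell_avg n p f j - cell_avg n p g j.
Proof.
  rewrite (cell_avg_ext n p j _ (fun t => f t + -1 * g t)) by (intros; ring).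
  rewrite cell_avg_add, cell_avg_scal. ring.
Qed.

Lemma cell_avg_const n p j c : (1 <= p)%nat -> cell_avg n p (fun _ => c) j = c.
Proof.
  intros Hp. unfold cell_avg.
  rewrite (sumR_ext _ _ _ (fun _ => c)), sumR_const.
  - field. apply not_0_INR; lia.
  - intros nu _. unfold sumR, w_gauss. simpl. field.
Qed.

Lemma cell_avg_abs_le n p j f M : (1 <= p)%nat ->
  (forall nu q, (1 <= nu <= p)%nat -> Rabs (f (cell_node n p j nu q)) <= M) ->
  Rabs (cell_avg n p f j) <= M.
Proof.
  intros Hp H. unfold cell_avg.
  assert (HP : 0 < INR p) by (apply lt_0_INR; lia).
  rewrite Rabs_mult, Rabs_inv, (Rabs_right (INR p)) by lra.
  assert (Hsum : Rabs (sumR 1 p (fun nu => sumR 1 2 (fun q =>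
     w_gauss * f (cell_node n p j nu q)))) <= INR p * M).
  { apply sumR_abs_le. intros nu Hnu.
    replace M with (INR 2 * (w_gauss * M)) by (unfold w_gauss; simpl; field).
    apply sumR_abs_le. intros q _. rewrite Rabs_mult.
    unfold w_gauss. rewrite Rabs_right by lra. apply Rmult_le_compat_l; [lra|].
    apply H; lia. }
  apply (Rmult_le_reg_l (INR p)); [exact HP|].
  rewrite <- Rmult_assoc, Rinv_r, Rmult_1_l by lra. exact Hsum.
Qed.

Lemma indic_true {P} (d : {P} + {~ P}) : P -> indic d = 1.
Proof. intros H; destruct d; [reflexivity|contradiction]. Qed.

Lemma indic_false {P} (d : {P} + {~ P}) : ~ P -> indic d = 0.
Proof. intros H; destruct d; [contradiction|reflexivity]. Qed.

Lemma Qn_in_cell n p g j t : (1 <= n)%nat -> (1 <= j <= n)%nat -> in_cell n j t ->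
  Qn n p g t = cell_avg n p g j.
Proof.
  intros Hn Hj Hc. unfold Qn.
  assert (Ht : t <> 0).
  { destruct Hc as [H _].
    assert (0 <= INR (j - 1) / INR n)
      by (apply Rdiv_le_0_compat; [apply pos_INR|apply lt_0_INR; lia]).
    lra. }
  rewrite (indic_false (Req_dec_T t 0)) by exact Ht.
  rewrite (sumR_single _ _ _ j); [|lia|].
  - rewrite indic_true by exact Hc. ring.
  - intros i Hi Hne. rewrite indic_false; [ring|].
    intro Hc'. apply Hne. apply (in_cell_unique n i j t); auto; lia.
Qed.

Lemma Qn_cell_node n p g j nu q : (1 <= n)%nat -> (1 <= p)%nat -> (1 <= j <= n)%nat ->
  (1 <= nu <= p)%nat -> Qn n p g (cell_node n p j nu q) = cell_avg n p g j.
Proof.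
  intros Hn Hp Hj Hnu. apply Qn_in_cell; auto.
  pose proof (cell_node_bounds n p j nu q Hn Hp ltac:(lia) Hnu). split; lra.
Qed.

Lemma Qn_closed_cell n p g s : (1 <= n)%nat -> in01 s ->
  exists j, (1 <= j <= n)%nat /\ closed_cell n j s /\ Qn n p g s = cell_avg n p g j.
Proof.
  intros Hn [Hs0 Hs1].
  destruct (Req_dec s 0) as [->|Hs].
  - exists 1%nat. split; [lia|]. split.
    { pose proof (closed_cell_left n 1 Hn (le_n 1)) as H0.
      unfold Rdiv in H0; simpl in H0; rewrite Rmult_0_l in H0. exact H0. }
    unfold Qn. rewrite sumR_zero.
    + rewrite indic_true by reflexivity. ring.
    + intros i Hi. rewrite indic_false; [ring|]. intros [H _].
      assert (0 <= INR (i - 1) / INR n)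
        by (apply Rdiv_le_0_compat; [apply pos_INR|apply lt_0_INR; lia]).
      lra.
  - destruct (in_cell_exists n s) as [j [Hj Hc]]; [exact Hn|lra|].
    exists j. split; [exact Hj|]. split.
    + destruct Hc. unfold closed_cell. lra.
    + apply Qn_in_cell; auto.
Qed.

Lemma cell_avg_IQn n p g k : (1 <= n)%nat -> (1 <= p)%nat -> (1 <= k <= n)%nat ->
  cell_avg n p (IQn n p g) k = 0.
Proof.
  intros Hn Hp Hk.
  rewrite (cell_avg_ext n p k _ (fun t => g t - cell_avg n p g k)).
  - rewrite cell_avg_sub, cell_avg_const by exact Hp. ring.
  - intros nu q Hnu. unfold IQn. rewrite Qn_cell_node by auto. reflexivity.
Qed.

Lemma IQn_abs_le_oscillation n p w eps : (1 <= n)%nat -> (1 <= p)%nat ->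
  (forall j x y, (1 <= j <= n)%nat -> closed_cell n j x -> closed_cell n j y ->
     Rabs (w x - w y) <= eps) ->
  forall s, in01 s -> Rabs (IQn n p w s) <= eps.
Proof.
  intros Hn Hp Hosc s Hs.
  destruct (Qn_closed_cell n p w s Hn Hs) as [j [Hj [Hsj HQ]]].
  unfold IQn. rewrite HQ.
  rewrite <- (cell_avg_const n p j (w s)) at 1 by exact Hp. rewrite <- cell_avg_sub.
  apply cell_avg_abs_le; [exact Hp|]. intros nu q Hnu.
  apply (Hosc j); auto. apply cell_node_closed; auto; lia.
Qed.

Lemma IQn_cell_node_abs_le n p v Lv k nu q : (1 <= n)%nat -> (1 <= p)%nat ->
  (1 <= k <= n)%nat -> (1 <= nu <= p)%nat -> 0 <= Lv -> lipschitz01 Lv v ->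
  Rabs (IQn n p v (cell_node n p k nu q)) <= Lv * / INR n.
Proof.
  intros Hn Hp Hk Hnu HLv Hv.
  apply IQn_abs_le_oscillation; auto.
  - intros j x y Hj Hx Hy.
    eapply Rle_trans; [apply Hv; eapply closed_cell_in01; eauto|].
    apply Rmult_le_compat_l; [exact HLv|]. apply (closed_cell_width n j); auto; lia.
  - apply (closed_cell_in01 n k); [exact Hk|]. apply cell_node_closed; auto; lia.
Qed.

(** * Quadrature sums *)

(* The composite two-point Gauss rule on the [n * p] fine cells, grouped by coarse cells. *)
Definition gauss_sum (n p : nat) (F : R -> R) : R :=
  / INR n * sumR 1 n (fun k => cell_avg n p F k).

Lemma gauss_sum_ext n p F G : (forall t, F t = G t) -> gauss_sum n p F = gauss_sum n p G.
Proof.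
  intros H. unfold gauss_sum. f_equal. apply sumR_ext. intros k _.
  apply cell_avg_ext. intros; apply H.
Qed.

Lemma gauss_sum_sub n p F G :
  gauss_sum n p (fun t => F t - G t) = gauss_sum n p F - gauss_sum n p G.
Proof.
  unfold gauss_sum. rewrite <- Rmult_minus_distr_l, <- sumR_minus. f_equal.
  apply sumR_ext. intros k _. apply cell_avg_sub.
Qed.

Lemma Kmp_gauss_sum kappa phi n p g s : (1 <= n)%nat -> (1 <= p)%nat ->
  Kmp kappa phi (n * p) g s = gauss_sum n p (fun t => ell kappa s t (phi t) * g t).
Proof.
  intros Hn Hp. unfold Kmp, gauss_sum, cell_avg. rewrite sumR_blocks.
  rewrite mult_INR, Rinv_mult, Rmult_assoc. f_equal.
  rewrite <- sumR_scal. apply sumR_ext. intros j _. f_equal.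
  apply sumR_ext. intros nu _. apply sumR_ext. intros q _. ring.
Qed.

(* Zero cell means let [X] be replaced by [X - X (t_(k-1))] on every cell [k]: this costs
   [a h] off the cell [j0] where [X] is [a]-Lipschitz, and the single cell [j0] costs [b]. *)
Lemma gauss_sum_zero_mean_abs_le n p j0 (X e : R -> R) (a b E : R) :
  (1 <= n)%nat -> (1 <= p)%nat -> (1 <= j0 <= n)%nat -> 0 <= a -> 0 <= b -> 0 <= E ->
  (forall k, (1 <= k <= n)%nat -> cell_avg n p e k = 0) ->
  (forall k nu q, (1 <= k <= n)%nat -> (1 <= nu <= p)%nat ->
     Rabs (e (cell_node n p k nu q)) <= E) ->
  (forall k x y, (1 <= k <= n)%nat -> k <> j0 -> closed_cell n k x -> closed_cell n k y ->
     Rabs (X x - X y) <= a * Rabs (x - y)) ->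
  (forall nu q, (1 <= nu <= p)%nat -> Rabs (X (cell_node n p j0 nu q)) <= b) ->
  Rabs (gauss_sum n p (fun t => X t * e t)) <= (a + b) * E * / INR n.
Proof.
  intros Hn Hp Hj0 Ha Hb HE Hmean He HX HXj0.
  assert (HN : 0 < INR n) by (apply lt_0_INR; lia).
  set (h := / INR n).
  assert (Hh : 0 < h) by (apply Rinv_0_lt_compat; lra).
  assert (Hsum : Rabs (sumR 1 n (fun k => cell_avg n p (fun t => X t * e t) k))
                 <= INR n * (a * h * E) + b * E).
  { apply (sumR_abs_le_except _ _ _ j0).
    3: { apply Rmult_le_pos; [apply Rmult_le_pos|]; lra. }
    3: { apply Rmult_le_pos; lra. }
    - intros k Hk Hkj0.
      set (c := INR (k - 1) / INR n).
      assert (Hc : closed_cell n k c) by (apply closed_cell_left; lia).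
      rewrite (cell_avg_ext n p k _ (fun t => (X t - X c) * e t + X c * e t))
        by (intros; ring).
      rewrite cell_avg_add, cell_avg_scal, Hmean, Rmult_0_r, Rplus_0_r by lia.
      apply cell_avg_abs_le; [exact Hp|]. intros nu q Hnu.
      assert (Hz : closed_cell n k (cell_node n p k nu q)) by (apply cell_node_closed; lia).
      rewrite Rabs_mult. apply Rmult_le_compat; try apply Rabs_pos; [|apply He; lia].
      eapply Rle_trans; [apply (HX k); auto; lia|].
      apply Rmult_le_compat_l; [exact Ha|]. apply (closed_cell_width n k); auto; lia.
    - apply cell_avg_abs_le; [exact Hp|]. intros nu q Hnu.
      rewrite Rabs_mult. apply Rmult_le_compat; try apply Rabs_pos; auto. }
  unfold gauss_sum. fold h. rewrite Rabs_mult, (Rabs_right h) by lra.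
  replace ((a + b) * E * h) with (h * (INR n * (a * h * E) + b * E))
    by (unfold h; field; lra).
  apply Rmult_le_compat_l; [lra|exact Hsum].
Qed.

Section Estimates.

Variables (kappa : R -> R -> R -> R) (phi : R -> R) (K : R).
Hypothesis HK : kernel_estimates K (fun s t => ell kappa s t (phi t)).

Lemma Kmp_IQn_oscillation v Lv n p j0 s s' :
  (1 <= n)%nat -> (1 <= p)%nat -> 0 <= Lv -> lipschitz01 Lv v -> (1 <= j0 <= n)%nat ->
  closed_cell n j0 s -> closed_cell n j0 s' ->
  Rabs (Kmp kappa phi (n * p) (IQn n p v) s - Kmp kappa phi (n * p) (IQn n p v) s')
    <= 2 * K * Lv * (/ INR n) ^ 3.
Proof.
  intros Hn Hp HLv Hv Hj0 Hs Hs'.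
  pose proof (kernel_estimates_nonneg _ _ HK) as HK0.
  assert (Hh : 0 < / INR n) by (apply Rinv_0_lt_compat, lt_0_INR; lia).
  assert (Hs01 := closed_cell_in01 n j0 s Hj0 Hs).
  assert (Hs'01 := closed_cell_in01 n j0 s' Hj0 Hs').
  assert (Hss' : K * Rabs (s - s') <= K * / INR n)
    by (apply Rmult_le_compat_l; [exact HK0|]; apply (closed_cell_width n j0); auto; lia).
  rewrite !Kmp_gauss_sum, <- gauss_sum_sub by assumption.
  replace (2 * K * Lv * (/ INR n) ^ 3)
    with ((K * / INR n + K * / INR n) * (Lv * / INR n) * / INR n) by ring.
  rewrite (gauss_sum_ext n p _
             (fun t => (ell kappa s t (phi t) - ell kappa s' t (phi t)) * IQn n p v t))
    by (intros; ring).
  apply (gauss_sum_zero_mean_abs_le n p j0); auto.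
  - apply Rmult_le_pos; lra.
  - apply Rmult_le_pos; lra.
  - apply Rmult_le_pos; lra.
  - intros k Hk. apply cell_avg_IQn; auto.
  - intros k nu q Hk Hnu. apply IQn_cell_node_abs_le; auto.
  - intros k x y Hk Hkj0 Hx Hy.
    eapply Rle_trans.
    + apply (ke_mixed _ _ HK); eauto using closed_cell_in01, closed_cells_apart.
    + apply Rmult_le_compat_r; [apply Rabs_pos|exact Hss'].
  - intros nu q Hnu. eapply Rle_trans; [|exact Hss'].
    apply (ke_lip_s _ _ HK); auto.
    apply (closed_cell_in01 n j0); [exact Hj0|]. apply cell_node_closed; auto; lia.
Qed.

Lemma IQn_Kmp_IQn_abs_le v Lv n p : (1 <= n)%nat -> (1 <= p)%nat -> 0 <= Lv ->
  lipschitz01 Lv v -> forall s, in01 s ->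
  Rabs (IQn n p (Kmp kappa phi (n * p) (IQn n p v)) s) <= 2 * K * Lv * (/ INR n) ^ 3.
Proof.
  intros Hn Hp HLv Hv. apply IQn_abs_le_oscillation; auto.
  intros j x y Hj Hx Hy. apply (Kmp_IQn_oscillation v Lv n p j); auto.
Qed.

Lemma Kmp_IQn_abs_le g eps n p : (1 <= n)%nat -> (1 <= p)%nat -> 0 <= eps ->
  (forall x, in01 x -> Rabs (IQn n p g x) <= eps) -> forall s, in01 s ->
  Rabs (Kmp kappa phi (n * p) (IQn n p g) s) <= 2 * K * eps * / INR n.
Proof.
  intros Hn Hp Heps Hg s Hs.
  pose proof (kernel_estimates_nonneg _ _ HK) as HK0.
  destruct (Qn_closed_cell n p g s Hn Hs) as [j0 [Hj0 [Hsj0 _]]].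
  rewrite Kmp_gauss_sum by assumption.
  replace (2 * K * eps) with ((K + K) * eps) by ring.
  apply (gauss_sum_zero_mean_abs_le n p j0); auto.
  - intros k Hk. apply cell_avg_IQn; auto.
  - intros k nu q Hk Hnu. apply Hg.
    apply (closed_cell_in01 n k); [exact Hk|]. apply cell_node_closed; auto; lia.
  - intros k x y Hk Hkj0 Hx Hy.
    apply (ke_lip_t _ _ HK); eauto using closed_cell_in01, closed_cells_apart.
  - intros nu q Hnu. apply (ke_bound _ _ HK); [exact Hs|].
    apply (closed_cell_in01 n j0); [exact Hj0|]. apply cell_node_closed; auto; lia.
Qed.

End Estimates.

Theorem proposition4p1
  (kappa : R -> R -> R -> R) (f phi v : R -> R)
  (Hk : class_G2_2_0 kappa)
  (Hf : C2_01 f)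
  (Hphi_sol : solves kappa f phi)
  (Hphi_uniq : forall x, C0_01 x -> solves kappa f x -> forall s, in01 s -> x s = phi s)
  (Hphi_C2 : C2_01 phi)
  (Hv : C1_01 v) :
  (exists C : R, exists N : nat, forall n p : nat, (N <= n)%nat -> (1 <= p)%nat ->
     forall s, in01 s ->
       Rabs (IQn n p (Kmp kappa phi (n * p) (IQn n p v)) s) <= C * (/ INR n) ^ 3)
  /\
  (exists C : R, exists N : nat, forall n p : nat, (N <= n)%nat -> (1 <= p)%nat ->
     forall s, in01 s ->
       Rabs (Kmp kappa phi (n * p) (IQn n p (Kmp kappa phi (n * p) (IQn n p v))) s)
         <= C * (/ INR n) ^ 4).
Proof.
  pose proof (C2_01_C1_01 phi Hphi_C2) as Hphi_C1.
  destruct (C1_01_lipschitz01 phi Hphi_C1) as [Lp [HLp Hphi_lip]].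
  destruct (C1_01_bounded phi Hphi_C1) as [B HB].
  destruct (C1_01_lipschitz01 v Hv) as [Lv [HLv Hv_lip]].
  destruct (ell_kernel_estimates kappa phi B Lp Hk HLp HB Hphi_lip) as [K HK].
  pose proof (kernel_estimates_nonneg _ _ HK) as HK0.
  split.
  - exists (2 * K * Lv), 1%nat. intros n p Hn Hp.
    apply (IQn_Kmp_IQn_abs_le kappa phi K HK); auto.
  - exists (2 * K * (2 * K * Lv)), 1%nat. intros n p Hn Hp s Hs.
    assert (Hh : 0 <= / INR n) by (left; apply Rinv_0_lt_compat, lt_0_INR; lia).
    replace (2 * K * (2 * K * Lv) * (/ INR n) ^ 4)
      with (2 * K * (2 * K * Lv * (/ INR n) ^ 3) * / INR n) by ring.
    apply (Kmp_IQn_abs_le kappa phi K HK); auto.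
    + apply Rmult_le_pos; [nra|apply pow_le; exact Hh].
    + apply (IQn_Kmp_IQn_abs_le kappa phi K HK); auto.
Qed.
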